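(* Let $f^*$ be the norm on $\mathbb{R}^2$ whose unit ball is $\{(x_1,x_2): |x_1+x_2|\le4,\ |x_1-x_2|\le1\}$. Then there exists $\alpha=(\alpha_1,\alpha_2)\in\mathbb{R}^2\setminus\mathbb{Q}^2$ such that the sequence of all $f^*$-best simultaneous approximations $(p_\nu,a_\nu)$ to $\alpha$ has constant signature sequence: $\operatorname{sign}\xi_\nu=(+,+)$ for every $\nu$, where $\xi_\nu=\alpha p_\nu-a_\nu$.
   Context: For a vector $\eta=(\eta_1,\eta_2)$, $\operatorname{sign}\eta=(\operatorname{sign}\eta_1,\operatorname{sign}\eta_2)$. For a norm $f$ on $\mathbb{R}^n$ and $\alpha\in\mathbb{R}^n$, an $f$-best simultaneous approximation is an integer point $\tau=(p,a_1,\dots,a_n)\in\mathbb{Z}^{n+1}$ with $p\ge1$ such that $f(\alpha q-b)>f(\alpha p-a)$ for all $(q,b)\in\mathbb{Z}^{n+1}$ with $1\le q\le p-1$ and for all $(p,b)$ with $b\ne a$. They form a sequence $(p_\nu,a_\nu)$ with $p_1<p_2<\dots$. *)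

From Stdlib Require Import Reals ZArith QArith Qreals.
Open Scope R_scope.

(* The norm f* on R^2 whose unit ball is
   { (x1,x2) : |x1+x2| <= 4, |x1-x2| <= 1 }.
   Its gauge (Minkowski functional) is max(|x1+x2|/4, |x1-x2|). *)
Definition fstar (x1 x2 : R) : R :=
  Rmax (Rabs (x1 + x2) / 4) (Rabs (x1 - x2)).

Definition err (al1 al2 : R) (q b1 b2 : Z) : R :=
  fstar (al1 * IZR q - IZR b1) (al2 * IZR q - IZR b2).

Definition is_best_approx (al1 al2 : R) (p a1 a2 : Z) : Prop :=
  (1 <= p)%Z /\
  (forall q b1 b2 : Z, (1 <= q <= p - 1)%Z ->
      err al1 al2 q b1 b2 > err al1 al2 p a1 a2) /\
  (forall b1 b2 : Z, (b1, b2) <> (a1, a2) ->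
      err al1 al2 p b1 b2 > err al1 al2 p a1 a2).

Definition in_Q2 (al1 al2 : R) : Prop :=
  exists r1 r2 : Q, Q2R r1 = al1 /\ Q2R r2 = al2.

From Stdlib Require Import Reals ZArith QArith Qreals Znumtheory Lra Lia.
Open Scope R_scope.

(* Let N_0 = 1, N_(k+1) = 32 N_k^2, and take for alpha_1 (resp. alpha_2) the sum of the 1/N_m
   over odd m (resp. even m >= 2).  At level k, the point (N_k, a_k), where a_k/N_k are the
   partial sums up to index k, has error xi_k = (x, y) up to swapping the coordinates, with
   x about 1/(32 N_k) and 0 < y <= x tiny; the numerator behind y is odd, hence coprime to the
   power of two N_k.  Let 1 <= q < N_(k+1).  If N_k does not divide q, the y-coordinate of
   alpha q - b stays at distance >= 1/(2 N_k) from 0; if q = m N_k, the error at q is m xi_k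
   shifted by an integer in the x-coordinate.  Either way f*(alpha q - b) >= f*(xi_k), so the
   best approximations are exactly the (N_k, a_k), whose errors lie in the open positive
   quadrant; and alpha is irrational because these errors never vanish. *)

Lemma Rinv_ge1_bounds x : 1 <= x -> 0 < / x <= 1.
Proof.
  intro Hx. split.
  - apply Rinv_0_lt_compat. lra.
  - rewrite <- Rinv_1. apply Rinv_le_contravar; lra.
Qed.

Lemma fstar_sym x y : fstar x y = fstar y x.
Proof.
  unfold fstar. rewrite Rplus_comm, <- (Rabs_Ropp (y - x)), Ropp_minus_distr. reflexivity.
Qed.

Lemma fstar_ge_sum x y : Rabs (x + y) / 4 <= fstar x y.
Proof. apply Rmax_l. Qed.

Lemma fstar_ge_diff x y : Rabs (x - y) <= fstar x y.
Proof. apply Rmax_r. Qed.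

Lemma fstar_ge_abs_r x y : 2 * Rabs y <= 5 * fstar x y.
Proof.
  pose proof (fstar_ge_sum x y). pose proof (fstar_ge_diff x y).
  pose proof (Rle_abs (x + y)). pose proof (Rle_abs (- (x + y))). rewrite Rabs_Ropp in *.
  pose proof (Rle_abs (x - y)). pose proof (Rle_abs (- (x - y))). rewrite Rabs_Ropp in *.
  unfold Rabs at 1; destruct (Rcase_abs y); lra.
Qed.

Lemma fstar_pos x y : 0 < x -> 0 <= y -> 0 < fstar x y.
Proof.
  intros Hx Hy. pose proof (fstar_ge_sum x y) as Hsum. rewrite Rabs_right in Hsum; lra.
Qed.

Lemma fstar_le x y c : Rabs (x + y) <= 4 * c -> Rabs (x - y) <= c -> fstar x y <= c.
Proof. intros. apply Rmax_lub; lra. Qed.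

Lemma fstar_scale m x y : 0 <= m -> fstar (m * x) (m * y) = m * fstar x y.
Proof.
  intro Hm. unfold fstar.
  rewrite <- Rmult_plus_distr_l, <- Rmult_minus_distr_l, !Rabs_mult, (Rabs_right m) by lra.
  rewrite <- RmaxRmult by lra. unfold Rdiv. rewrite Rmult_assoc. reflexivity.
Qed.

Lemma err_swap al1 al2 q b1 b2 : err al1 al2 q b1 b2 = err al2 al1 q b2 b1.
Proof. apply fstar_sym. Qed.

Lemma in_Q2_exact_approx al1 al2 :
  in_Q2 al1 al2 -> exists D b1 b2, (1 <= D)%Z /\ err al1 al2 D b1 b2 = 0.
Proof.
  intros [[n1 d1] [[n2 d2] [<- <-]]]. unfold Q2R; simpl.
  exists (Z.pos d1 * Z.pos d2)%Z, (n1 * Z.pos d2)%Z, (n2 * Z.pos d1)%Z. split; [lia|].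
  assert (0 < IZR (Z.pos d1)) by (apply IZR_lt; lia).
  assert (0 < IZR (Z.pos d2)) by (apply IZR_lt; lia).
  unfold err. rewrite !mult_IZR.
  replace (IZR n1 * / IZR (Z.pos d1) * (IZR (Z.pos d1) * IZR (Z.pos d2)) - IZR n1 * IZR (Z.pos d2))
    with 0 by (field; lra).
  replace (IZR n2 * / IZR (Z.pos d2) * (IZR (Z.pos d1) * IZR (Z.pos d2)) - IZR n2 * IZR (Z.pos d1))
    with 0 by (field; lra).
  unfold fstar. rewrite Rplus_0_r, Rminus_0_r, Rabs_R0. apply Rmax_right. lra.
Qed.

Section Criterion.

Variables (al1 al2 : R) (N A1 A2 : nat -> Z).
Hypothesis N_0 : N 0%nat = 1%Z.
Hypothesis N_lt_S : forall k, (N k < N (S k))%Z.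
Hypothesis level_pos : forall k,
  0 < al1 * IZR (N k) - IZR (A1 k) /\ 0 < al2 * IZR (N k) - IZR (A2 k).
Hypothesis level_min : forall k q b1 b2, (1 <= q < N (S k))%Z ->
  err al1 al2 (N k) (A1 k) (A2 k) <= err al1 al2 q b1 b2.

Lemma N_ge_index k : (Z.of_nat k + 1 <= N k)%Z.
Proof. induction k as [|k IH]; [rewrite N_0; lia|]. specialize (N_lt_S k). lia. Qed.

Lemma exists_level p : (1 <= p)%Z -> exists k, (N k <= p < N (S k))%Z.
Proof.
  intro Hp.
  assert (Hsweep : forall n, (exists k, (N k <= p < N (S k))%Z) \/ (N n <= p)%Z).
  { induction n as [|n [IH | IH]]; [right; lia | left; exact IH|].
    destruct (Z_lt_le_dec p (N (S n))); [left; exists n; lia | right; lia]. }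
  destruct (Hsweep (Z.to_nat p)) as [H | H]; [exact H|].
  pose proof (N_ge_index (Z.to_nat p)). lia.
Qed.

Lemma level_err_pos k : 0 < err al1 al2 (N k) (A1 k) (A2 k).
Proof. destruct (level_pos k). apply fstar_pos; lra. Qed.

Lemma not_in_Q2 : ~ in_Q2 al1 al2.
Proof.
  intro HQ. destruct (in_Q2_exact_approx _ _ HQ) as [D [b1 [b2 [HD Hexact]]]].
  destruct (exists_level D HD) as [k Hk].
  pose proof (level_min k D b1 b2 (conj HD (proj2 Hk))). pose proof (level_err_pos k). lra.
Qed.

Lemma best_approx_is_level p a1 a2 :
  is_best_approx al1 al2 p a1 a2 -> exists k, p = N k /\ a1 = A1 k /\ a2 = A2 k.
Proof.
  intros [Hp [Hearlier Hsame]].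
  destruct (exists_level p Hp) as [k Hk]. exists k.
  pose proof (level_min k p a1 a2 (conj Hp (proj2 Hk))) as Hmin.
  destruct (Z.eq_dec (N k) p) as [<- | Hne].
  - split; [reflexivity|].
    destruct (Z.eq_dec a1 (A1 k)), (Z.eq_dec a2 (A2 k)); try (split; assumption);
      exfalso; assert (Hother : (A1 k, A2 k) <> (a1, a2)) by congruence;
      specialize (Hsame _ _ Hother); lra.
  - exfalso. assert (Hq : (1 <= N k <= p - 1)%Z) by (pose proof (N_ge_index k); lia).
    specialize (Hearlier _ (A1 k) (A2 k) Hq). lra.
Qed.

End Criterion.

Section Level.

Variables d x y : R.
Hypothesis d_ge1 : 1 <= d.
Hypothesis y_ge0 : 0 <= y.
Hypothesis y_le_x : y <= x.
Hypothesis x_le : x <= y + / (32 * d).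
Hypothesis y_small : y <= / (64 * d ^ 2).

Let d_inv :
  0 < / d <= 1 /\ d * / d = 1 /\ / (32 * d) = / d / 32 /\ / (64 * d ^ 2) = (/ d) ^ 2 / 64.
Proof. repeat split; try (field; lra); apply Rinv_ge1_bounds; lra. Qed.

Lemma fstar_level_ub : fstar x y <= / (32 * d).
Proof.
  destruct d_inv as [Ha [Hda [E1 E2]]]. rewrite E1 in *. rewrite E2 in y_small.
  apply fstar_le; rewrite Rabs_right by lra; nra.
Qed.

Lemma fstar_level_multiple (m : R) (B : Z) :
  1 <= m <= 32 * d - 1 -> fstar x y <= fstar (m * x - IZR B) (m * y).
Proof.
  intro Hm. pose proof fstar_level_ub as Hub.
  destruct d_inv as [Ha [Hda [E1 E2]]]. rewrite E1 in *.
  pose proof (fstar_ge_diff (m * x - IZR B) (m * y)) as Hdiff.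
  destruct (Z.lt_trichotomy B 0) as [HB | [HB | HB]].
  - assert (IZR B <= -1) by (apply IZR_le; lia).
    rewrite Rabs_right in Hdiff; nra.
  - subst B. rewrite Rminus_0_r, fstar_scale by lra.
    pose proof (Rabs_pos (x - y)). pose proof (fstar_ge_diff x y). nra.
  - assert (1 <= IZR B) by (apply IZR_le; lia).
    pose proof (Rle_abs (- (m * x - IZR B - m * y))).
    rewrite Rabs_Ropp in *. nra.
Qed.

Lemma fstar_level_not_multiple (n : Z) (q w : R) :
  n <> 0%Z -> 0 <= q <= 32 * d ^ 2 -> fstar x y <= fstar w ((IZR n + q * y) / d).
Proof.
  intros Hn Hq. pose proof fstar_level_ub as Hub.
  destruct d_inv as [Ha [Hda [E1 E2]]]. rewrite E1 in *. rewrite E2 in y_small.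
  assert (Hqy : 0 <= q * y <= 1 / 2).
  { assert (q * y <= 32 * d ^ 2 * ((/ d) ^ 2 / 64)) by (apply Rmult_le_compat; nra).
    assert (32 * d ^ 2 * ((/ d) ^ 2 / 64) = 1 / 2) by (field; lra).
    split; nra. }
  assert (Habs : / d / 2 <= Rabs ((IZR n + q * y) / d)).
  { unfold Rdiv. rewrite Rabs_mult, (Rabs_right (/ d)) by lra.
    destruct (Z.lt_total n 0) as [Hlt | [Heq | Hgt]]; [|contradiction|].
    - assert (IZR n <= -1) by (apply IZR_le; lia). rewrite Rabs_left by lra. nra.
    - assert (1 <= IZR n) by (apply IZR_le; lia). rewrite Rabs_right by lra. nra. }
  pose proof (fstar_ge_abs_r w ((IZR n + q * y) / d)). lra.
Qed.

End Level.

Lemma err_level (u v : R) (D M1 M2 q a1 a2 : Z) :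
  (1 <= D)%Z -> rel_prime D M2 ->
  0 <= v * IZR D - IZR M2 <= u * IZR D - IZR M1 ->
  u * IZR D - IZR M1 <= v * IZR D - IZR M2 + / (32 * IZR D) ->
  v * IZR D - IZR M2 <= / (64 * IZR D ^ 2) ->
  (1 <= q < 32 * D * D)%Z ->
  err u v D M1 M2 <= err u v q a1 a2.
Proof.
  intros HD Hcop Hxy Hx Hy Hq. unfold err.
  assert (Hd : 1 <= IZR D) by (apply IZR_le; lia).
  destruct (Z.eq_dec (q * M2 - a2 * D) 0) as [Hn | Hn].
  - assert (HDq : (D | q)%Z).
    { apply Gauss with M2; [exists a2; lia | exact Hcop]. }
    (* [D] divides [q]: the error at [q] is [m] times the error at [D], up to an integer
       shift of its first coordinate. *)
    destruct HDq as [m ->].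
    assert (Ha2 : a2 = (m * M2)%Z) by nia.
    subst a2.
    replace (u * IZR (m * D) - IZR a1)
      with (IZR m * (u * IZR D - IZR M1) - IZR (a1 - m * M1))
      by (rewrite minus_IZR, !mult_IZR; ring).
    replace (v * IZR (m * D) - IZR (m * M2))
      with (IZR m * (v * IZR D - IZR M2)) by (rewrite !mult_IZR; ring).
    apply (fstar_level_multiple (IZR D)); try lra.
    split; [apply IZR_le; nia|].
    replace (32 * IZR D - 1) with (IZR (32 * D - 1))
      by (rewrite minus_IZR, mult_IZR; reflexivity).
    apply IZR_le. nia.
  - replace (v * IZR q - IZR a2)
      with ((IZR (q * M2 - a2 * D) + IZR q * (v * IZR D - IZR M2)) / IZR D)
      by (rewrite minus_IZR, !mult_IZR; field; lra).
    apply (fstar_level_not_multiple (IZR D)); try lra; auto.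
    split; [apply IZR_le; lia|].
    replace (32 * IZR D ^ 2) with (IZR (32 * D * D)) by (rewrite !mult_IZR; ring).
    apply IZR_le. lia.
Qed.

Fixpoint denom (k : nat) : Z :=
  match k with O => 1 | S j => 32 * denom j * denom j end%Z.

Lemma denom_S k : denom (S k) = (32 * denom k * denom k)%Z.
Proof. reflexivity. Qed.

Lemma denom_ge1 k : (1 <= denom k)%Z.
Proof. induction k; [reflexivity|]. rewrite denom_S. nia. Qed.

Lemma denom_lt_S k : (denom k < denom (S k))%Z.
Proof. pose proof (denom_ge1 k). rewrite denom_S. nia. Qed.

Lemma IZR_denom_S k : IZR (denom (S k)) = 32 * IZR (denom k) ^ 2.
Proof. rewrite denom_S, !mult_IZR. ring. Qed.

Lemma inv_denom_S k : / IZR (denom (S k)) = (/ IZR (denom k)) ^ 2 / 32.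
Proof.
  rewrite IZR_denom_S. assert (1 <= IZR (denom k)) by (apply IZR_le, denom_ge1).
  field. lra.
Qed.

Lemma inv_denom_bounds k : 0 < / IZR (denom k) <= 1.
Proof. apply Rinv_ge1_bounds, IZR_le, denom_ge1. Qed.

Lemma rel_prime_denom k m : Z.odd m = true -> rel_prime (denom k) m.
Proof.
  intro Hm.
  assert (H2 : rel_prime 2 m).
  { apply prime_rel_prime; [exact prime_2|]. intros [c Hc].
    now rewrite Hc, Z.odd_mul, Bool.andb_comm in Hm. }
  induction k as [|k IH].
  - apply rel_prime_1.
  - rewrite denom_S.
    apply rel_prime_sym. repeat apply rel_prime_mult; try (apply rel_prime_sym; exact IH).
    change 32%Z with (2 ^ 5)%Z. apply Zpow_facts.rel_prime_Zpower_r; [lia|].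
    apply rel_prime_sym. exact H2.
Qed.

Section Series.

Variable sel : nat -> bool.

Fixpoint numer (k : nat) : Z :=
  match k with O => 0 | S j => numer j * (32 * denom j) + Z.b2z (sel (S j)) end%Z.

Lemma numer_S k : numer (S k) = (numer k * (32 * denom k) + Z.b2z (sel (S k)))%Z.
Proof. reflexivity. Qed.

Definition partial_sum (k : nat) : R := IZR (numer k) / IZR (denom k).

Lemma partial_sum_S k :
  partial_sum (S k) = partial_sum k + IZR (Z.b2z (sel (S k))) / IZR (denom (S k)).
Proof.
  unfold partial_sum. rewrite numer_S, IZR_denom_S, plus_IZR, !mult_IZR.
  assert (1 <= IZR (denom k)) by (apply IZR_le, denom_ge1).
  field. lra.
Qed.

Lemma rel_prime_denom_numer k : sel k = true -> rel_prime (denom k) (numer k).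
Proof.
  destruct k as [|k]; intro Hk.
  - apply rel_prime_1.
  - apply rel_prime_denom. rewrite numer_S, Hk, Z.odd_add, Z.odd_mul, Z.odd_mul.
    now rewrite Bool.andb_comm.
Qed.

Lemma partial_sum_growing : Un_growing partial_sum.
Proof.
  intro k. rewrite partial_sum_S. pose proof (inv_denom_bounds (S k)).
  destruct (sel (S k)); cbn [Z.b2z]; unfold Rdiv; lra.
Qed.

Lemma partial_sum_majorant_decreasing :
  Un_decreasing (fun k => partial_sum k + 2 / IZR (denom (S k))).
Proof.
  intro k. cbv beta. rewrite partial_sum_S. unfold Rdiv. rewrite (inv_denom_S (S k)).
  pose proof (inv_denom_bounds (S k)).
  destruct (sel (S k)); cbn [Z.b2z]; nra.
Qed.

Lemma partial_sum_le_majorant n k : partial_sum n <= partial_sum k + 2 / IZR (denom (S k)).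
Proof.
  pose proof (inv_denom_bounds (S k)).
  destruct (le_ge_dec n k) as [Hnk | Hkn].
  - pose proof (growing_prop _ _ _ partial_sum_growing Hnk). lra.
  - pose proof (decreasing_prop _ _ _ partial_sum_majorant_decreasing Hkn).
    pose proof (inv_denom_bounds (S n)). simpl in *. lra.
Qed.

Definition partial_sum_range (r : R) : Prop := exists n, r = partial_sum n.

Lemma partial_sum_range_bound : bound partial_sum_range.
Proof.
  exists (partial_sum 0 + 2 / IZR (denom 1)). intros r [n ->]. apply partial_sum_le_majorant.
Qed.

(* The sum of the series of the [/ denom m] over [m >= 1] with [sel m], as the supremum of
   its partial sums. *)
Definition alpha : R :=
  proj1_sig (completeness partial_sum_range partial_sum_range_bound
               (ex_intro _ (partial_sum 0) (ex_intro _ 0%nat eq_refl))).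

Lemma alpha_lub : is_lub partial_sum_range alpha.
Proof. unfold alpha. destruct completeness as [a Ha]. exact Ha. Qed.

Lemma partial_sum_mul_denom k : partial_sum k * IZR (denom k) = IZR (numer k).
Proof.
  unfold partial_sum. assert (1 <= IZR (denom k)) by (apply IZR_le, denom_ge1). field. lra.
Qed.

Lemma alpha_sub_partial_sum_bounds k :
  0 <= alpha - partial_sum k <= 2 / IZR (denom (S k)).
Proof.
  destruct alpha_lub as [Hub Hleast].
  assert (partial_sum k <= alpha) by (apply Hub; exists k; reflexivity).
  assert (alpha <= partial_sum k + 2 / IZR (denom (S k))).
  { apply Hleast. intros r [n ->]. apply partial_sum_le_majorant. }
  lra.
Qed.

Lemma alpha_sub_partial_sum_SS k :
  alpha - partial_sum k =
    IZR (Z.b2z (sel (S k))) / IZR (denom (S k)) +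
    IZR (Z.b2z (sel (S (S k)))) / IZR (denom (S (S k))) + (alpha - partial_sum (S (S k))).
Proof. rewrite !partial_sum_S. ring. Qed.

End Series.

Lemma level_error_bounds (d b c g r1 r2 : R) :
  1 <= d -> b = (/ d) ^ 2 / 32 -> c = b ^ 2 / 32 -> g = c ^ 2 / 32 ->
  0 <= r1 <= 2 * g -> 0 <= r2 <= 2 * g ->
  0 < (c + r2) * d <= (b + r1) * d /\
  (b + r1) * d <= (c + r2) * d + / (32 * d) /\
  (c + r2) * d <= / (64 * d ^ 2).
Proof.
  intros Hd Eb Ec Eg R1 R2. rewrite (Rmult_comm (b + r1)), (Rmult_comm (c + r2)).
  pose proof (Rinv_ge1_bounds d Hd) as Ha.
  replace (/ (32 * d)) with (/ d / 32) by (field; lra).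
  replace (/ (64 * d ^ 2)) with ((/ d) ^ 2 / 64) by (field; lra).
  set (a := / d) in *.
  assert (Hda : d * a = 1) by (unfold a; field; lra).
  assert (Pb : d * b = a / 32).
  { rewrite Eb. replace (d * (a ^ 2 / 32)) with ((d * a) * a / 32) by field.
    rewrite Hda. field. }
  assert (Pc : d * c = a ^ 3 / 32768).
  { rewrite Ec, Eb.
    replace (d * ((a ^ 2 / 32) ^ 2 / 32)) with ((d * a) * a ^ 3 / 32768) by field.
    rewrite Hda. field. }
  assert (Pg : d * g <= d * c / 32).
  { assert (0 < b <= 1) by (rewrite Eb; simpl; split; nra).
    assert (0 < c <= 1) by (rewrite Ec; simpl; split; nra).
    rewrite Eg. nra. }
  assert (0 <= d * r1 <= 2 * (d * g)) by nra.
  assert (0 <= d * r2 <= 2 * (d * g)) by nra.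
  assert (a ^ 3 <= a ^ 2 <= a) by (simpl; nra).
  assert (0 < a ^ 3) by (simpl; nra).
  rewrite !Rmult_plus_distr_l. repeat split; lra.
Qed.

Section Alternating.

Variables s1 s2 : nat -> bool.
Hypothesis alternate : forall m, s1 (S m) = s2 m /\ s2 (S m) = s1 m.

Lemma alternating_level_errors k : s1 k = false -> s2 k = true ->
  0 < alpha s2 * IZR (denom k) - IZR (numer s2 k)
    <= alpha s1 * IZR (denom k) - IZR (numer s1 k) /\
  alpha s1 * IZR (denom k) - IZR (numer s1 k)
    <= alpha s2 * IZR (denom k) - IZR (numer s2 k) + / (32 * IZR (denom k)) /\
  alpha s2 * IZR (denom k) - IZR (numer s2 k) <= / (64 * IZR (denom k) ^ 2).
Proof.
  intros H1 H2.
  destruct (alternate k) as [H1S H2S]. destruct (alternate (S k)) as [H1SS H2SS].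
  rewrite H2 in H1S. rewrite H1 in H2S. rewrite H2S in H1SS. rewrite H1S in H2SS.
  rewrite <- !partial_sum_mul_denom, <- !Rmult_minus_distr_r.
  rewrite (alpha_sub_partial_sum_SS s1 k), (alpha_sub_partial_sum_SS s2 k).
  rewrite H1S, H1SS, H2S, H2SS. cbn [Z.b2z].
  replace (IZR 1 / IZR (denom (S k)) + IZR 0 / IZR (denom (S (S k))))
    with (/ IZR (denom (S k))) by (unfold Rdiv; ring).
  replace (IZR 0 / IZR (denom (S k)) + IZR 1 / IZR (denom (S (S k))))
    with (/ IZR (denom (S (S k)))) by (unfold Rdiv; ring).
  apply (level_error_bounds _ _ _ (/ IZR (denom (S (S (S k)))))).
  - apply IZR_le, denom_ge1.
  - apply inv_denom_S.
  - apply inv_denom_S.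
  - apply inv_denom_S.
  - apply alpha_sub_partial_sum_bounds.
  - apply alpha_sub_partial_sum_bounds.
Qed.

Lemma alternating_level_pos k : s1 k = false -> s2 k = true ->
  0 < alpha s1 * IZR (denom k) - IZR (numer s1 k) /\
  0 < alpha s2 * IZR (denom k) - IZR (numer s2 k).
Proof.
  intros H1 H2. pose proof (alternating_level_errors k H1 H2). lra.
Qed.

Lemma alternating_level_min k q b1 b2 : s1 k = false -> s2 k = true ->
  (1 <= q < denom (S k))%Z ->
  err (alpha s1) (alpha s2) (denom k) (numer s1 k) (numer s2 k)
    <= err (alpha s1) (alpha s2) q b1 b2.
Proof.
  intros H1 H2 Hq. destruct (alternating_level_errors k H1 H2) as [Hyx [Hx Hy]].
  apply err_level; try lra.
  - apply denom_ge1.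
  - apply rel_prime_denom_numer. exact H2.
  - rewrite <- denom_S. exact Hq.
Qed.

End Alternating.

Lemma odd_even_alternate m : Nat.odd (S m) = Nat.even m /\ Nat.even (S m) = Nat.odd m.
Proof. split; [apply Nat.odd_succ | apply Nat.even_succ]. Qed.

Lemma even_odd_alternate m : Nat.even (S m) = Nat.odd m /\ Nat.odd (S m) = Nat.even m.
Proof. split; [apply Nat.even_succ | apply Nat.odd_succ]. Qed.

Lemma odd_even_level_pos k :
  0 < alpha Nat.odd * IZR (denom k) - IZR (numer Nat.odd k) /\
  0 < alpha Nat.even * IZR (denom k) - IZR (numer Nat.even k).
Proof.
  pose proof (Nat.negb_even k) as Hodd.
  destruct (Nat.even k) eqn:Heven; symmetry in Hodd; simpl in Hodd.
  - apply alternating_level_pos; auto using odd_even_alternate.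
  - destruct (alternating_level_pos _ _ even_odd_alternate k Heven Hodd). split; assumption.
Qed.

Lemma odd_even_level_min k q b1 b2 : (1 <= q < denom (S k))%Z ->
  err (alpha Nat.odd) (alpha Nat.even) (denom k) (numer Nat.odd k) (numer Nat.even k)
    <= err (alpha Nat.odd) (alpha Nat.even) q b1 b2.
Proof.
  intro Hq. pose proof (Nat.negb_even k) as Hodd.
  destruct (Nat.even k) eqn:Heven; symmetry in Hodd; simpl in Hodd.
  - apply alternating_level_min; auto using odd_even_alternate.
  - rewrite (err_swap _ _ (denom k)), (err_swap _ _ q).
    apply alternating_level_min; auto using even_odd_alternate.
Qed.

Theorem theorem2p7 :
  exists al1 al2 : R,
    ~ in_Q2 al1 al2 /\
    forall p a1 a2 : Z, is_best_approx al1 al2 p a1 a2 ->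
      0 < al1 * IZR p - IZR a1 /\ 0 < al2 * IZR p - IZR a2.
Proof.
  exists (alpha Nat.odd), (alpha Nat.even). split.
  - apply (not_in_Q2 _ _ denom (numer Nat.odd) (numer Nat.even));
      auto using denom_lt_S, odd_even_level_pos, odd_even_level_min.
  - intros p a1 a2 Hbest.
    destruct (best_approx_is_level _ _ denom (numer Nat.odd) (numer Nat.even)
                eq_refl denom_lt_S odd_even_level_min _ _ _ Hbest) as [k [-> [-> ->]]].
    apply odd_even_level_pos.
Qed.
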